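(* Fix an infinite-to-one map $f$ of $\mathbb{Z}$ onto $\mathbb{Z}$ and consider the blue backward Markov chain on columns described in the context. Let $n\ge1$ and let $(a(i,j))_{-n\le i,j\le n}$ be a fixed array of $0$s and $1$s. Then for every $\epsilon>0$ there exists $m$ such that for all integers $M>m$, $N>m$ and all doubly infinite $0$-$1$ sequences $(A(i))_{i\in\mathbb{Z}}$, $(B(i))_{i\in\mathbb{Z}}$, $$\Big|P\big(X(i,j)=a(i,j),\,-n\le i,j\le n \,\big|\, X(i,M)=A(i)\ \forall i\big)-P\big(X(i,j)=a(i,j),\,-n\le i,j\le n \,\big|\, X(i,N)=B(i)\ \forall i\big)\Big|<\epsilon .$$
   Context: Random variables $X(i,j)\in\{0,1\}$, $i,j\in\mathbb{Z}$; for each $j$, the $j$-th column is $(X(i,j))_{i\in\mathbb{Z}}$. Blue transition rule (the chain runs backwards in $j$): given the column $j+1$, the variables $X(i,j)$, $i\in\mathbb{Z}$, are conditionally independent (and independent of the columns $j+2,j+3,\dots$), and $X(i,j)$ equals $X(f(i),j+1)$ with probability $2/3$ and equals $1-X(f(i),j+1)$ with probability $1/3$. The conditional probability given column $M$ (resp. $N$) means: fix that column and generate columns $M-1,M-2,\dots$ (resp. $N-1,N-2,\dots$) successively by the blue transition rule. *)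

From mathcomp Require Import all_boot all_order all_algebra.
From mathcomp Require Import reals.
Set Implicit Arguments. Unset Strict Implicit. Unset Printing Implicit Defensive.
Import Order.TTheory GRing.Theory Num.Theory.
Local Open Scope ring_scope.

Definition infinite_to_one_onto (f : int -> int) : Prop :=
  (forall y, exists x, f x = y) /\
  (forall y (k : nat), exists s : seq int,
      [/\ uniq s, (k <= size s)%N & all (fun x => f x == y) s]).

Definition wins (n : nat) : seq int := [seq (k%:Z - n%:Z) | k <- iota 0 (n.*2.+1)].
Definition window (n : nat) : seq (int * int) :=
  [seq (i, j) | i <- wins n, j <- wins n].

Definition steps (M j : int) : nat := if j < M then `|M - j|%N else 0%N.

(* Realisation of the blue chain by independent flips:
   X(i,j) = X(f i, j+1) XOR xi(i,j), with xi(i,j) iid, P(xi = true) = 1/3.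
   Hence, given column M = A, X(i,j) = A(f^(M-j) i) XOR
   (XOR_{k < M-j} xi(f^k i, j+k)). *)
Definition noise_sites (f : int -> int) (n : nat) (M : int) : seq (int * int) :=
  undup (flatten [seq [seq (iter k f p.1, p.2 + k%:Z) | k <- iota 0 (steps M p.2)]
                  | p <- window n]).

Definition Xval (f : int -> int) (M : int) (A : int -> bool)
    (xi : int * int -> bool) (p : int * int) : bool :=
  A (iter (steps M p.2) f p.1)
  (+) \big[addb/false]_(k <- iota 0 (steps M p.2)) xi (iter k f p.1, p.2 + k%:Z).

(* P( X(i,j) = a(i,j), -n <= i,j <= n | X(i,M) = A(i) for all i ) *)
Definition cond_prob (R : realType) (f : int -> int) (n : nat)
    (a : int -> int -> bool) (M : int) (A : int -> bool) : R :=
  let D := noise_sites f n M in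
  \sum_(xi : {ffun 'I_(size D) -> bool})
     (\prod_(t < size D) (if xi t then 1 / 3 else 2 / 3))
     * (if all (fun p => Xval f M A
                   (fun q => nth false [seq xi t | t <- enum 'I_(size D)] (index q D)) p
                 == a p.1 p.2) (window n)
        then 1 else 0).

(* Along the chain, [X(i,j)] is the value of column [M] at [f^(M-j) i], xored
   with independent [1/3]-coins on the path from [(i,j)] to column [M].  The
   number of column-[c] ancestors of the window is nonincreasing in [c], hence
   constant from some [c0] on, and beyond [c0] the ancestor paths never merge:
   they carry disjoint coins.  Given column [M], the value at each ancestor in
   column [c0] is therefore a boundary bit xored with [M - c0] fresh coins,
   within [(1/3)^(M-c0)/2] of a fair bit and independent of the rest.
   Replacing these values by fair bits one at a time moves the conditional
   probability by at most [r (1/3)^(M-c0)/2], [r] the number of ancestors, and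
   the resulting quantity no longer depends on [M] or on the boundary. *)

From mathcomp Require Import all_boot all_order all_algebra.
From mathcomp Require Import reals.
From mathcomp Require Import zify ring lra.
From Stdlib Require Import FunctionalExtensionality Classical.
Import Order.TTheory GRing.Theory Num.Theory.
Set Implicit Arguments. Unset Strict Implicit. Unset Printing Implicit Defensive.
Local Open Scope ring_scope.

Lemma mix_near_average (R : realFieldType) (q Et Ef Vt Vf e d : R) :
  0 <= q <= 1 -> 0 <= Vt <= 1 -> 0 <= Vf <= 1 ->
  `|Et - Vt| <= e -> `|Ef - Vf| <= e -> `|q - 1/2| <= d ->
  `|q * Et + (1 - q) * Ef - (Vt + Vf) / 2| <= e + d.
Proof.
move=> q01 Vt01 Vf01 hEt hEf hq.
have -> : q * Et + (1 - q) * Ef - (Vt + Vf) / 2 =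
          q * (Et - Vt) + (1 - q) * (Ef - Vf) + (q - 1/2) * (Vt - Vf) by field.
have hV : `|Vt - Vf| <= 1 by rewrite ler_norml; lra.
have hq0 : 0 <= 1 - q by lra.
apply: (le_trans (ler_normD _ _)); rewrite !normrM.
apply: lerD; last by rewrite -[d]mulr1 ler_pM.
apply: (le_trans (ler_normD _ _)); rewrite !normrM !(ger0_norm hq0) ger0_norm; last lra.
have := ler_wpM2l (proj1 (andP q01)) hEt; have := ler_wpM2l hq0 hEf; lra.
Qed.

Lemma exists_third_pow_lt (R : archiRealFieldType) (r : nat) (eps : R) :
  0 < eps -> exists K : nat, r%:R * (1/3) ^+ K < eps.
Proof.
move=> eps_gt0; set K := Num.Def.archi_bound (r%:R / eps); exists K.
have hK : r%:R / eps < K%:R by apply/archi_boundP/divr_ge0/ltW.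
have K_le : K%:R <= 3 ^+ K :> R by rewrite -natrX ler_nat ltnW // ltn_expl.
have pow_gt0 : 0 < 3 ^+ K :> R by rewrite exprn_gt0.
rewrite expr_div_n expr1n mul1r ltr_pdivrMr //.
by rewrite ltr_pdivrMr // in hK; apply: lt_le_trans hK _; rewrite mulrC ler_pM2l.
Qed.

Section CoinExpectation.
Variables (R : realFieldType) (T : eqType) (p : R).

Definition update (g : T -> bool) (x : T) (b : bool) : T -> bool :=
  fun q => if x == q then b else g q.

(* Expectation of [F] when the coins [g x], [x \in D], are independent with
   [P(g x = true) = p]; coins outside [D] are [false]. *)
Fixpoint expect (D : seq T) (F : (T -> bool) -> R) : R :=
  if D is x :: D' then
    p * expect D' (fun g => F (update g x true))
    + (1 - p) * expect D' (fun g => F (update g x false))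
  else F (fun _ => false).

Definition depends_on (U : Type) (P : T -> bool) (F : (T -> bool) -> U) :=
  forall g g', (forall q, P q -> g q = g' q) -> F g = F g'.

Lemma eq_expect D F G : F =1 G -> expect D F = expect D G.
Proof. by move=> /functional_extensionality ->. Qed.

Lemma expect_const D c : expect D (fun _ => c) = c.
Proof. by elim: D => //= x D ->; ring. Qed.

Lemma expect_add D F G : expect D (fun g => F g + G g) = expect D F + expect D G.
Proof.
elim: D F G => [|x D IH] F G //=.
by rewrite (IH (fun g => F (update g x true))) (IH (fun g => F (update g x false))); ring.
Qed.

Lemma expect_1sub D F : expect D (fun g => 1 - F g) = 1 - expect D F.
Proof.
elim: D F => [|x D IH] F //=.
by rewrite (IH (fun g => F (update g x true))) (IH (fun g => F (update g x false))); ring.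
Qed.

Hypothesis p01 : 0 <= p <= 1.

Lemma expect_bound D F : (forall g, 0 <= F g <= 1) -> 0 <= expect D F <= 1.
Proof.
case/andP: p01 => p0 p1.
elim: D F => [|x D IH] F hF /=; first exact: hF.
have /andP[t0 t1] := IH (fun g => F (update g x true)) (fun g => hF _).
have /andP[f0 f1] := IH (fun g => F (update g x false)) (fun g => hF _).
apply/andP; split; nra.
Qed.

Lemma depends_on_update U P (F : (T -> bool) -> U) x b :
  depends_on P F -> depends_on P (fun g => F (update g x b)).
Proof.
move=> hF g g' h; apply: hF => q Pq; rewrite /update; case: (x == q) => //; exact: h.
Qed.

Lemma update_irrelevant U P (F : (T -> bool) -> U) x b :
  depends_on P F -> ~~ P x -> (fun g => F (update g x b)) = F.
Proof.
move=> hF Px; apply: functional_extensionality => g; apply: hF => q Pq.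
by rewrite /update; case: eqP => // exq; move: Px; rewrite exq Pq.
Qed.

Lemma update_update g x b c : update (update g x c) x b = update g x b.
Proof.
by apply: functional_extensionality => q; rewrite /update; case: (x == q).
Qed.

Lemma update_comm g x y b c :
  x != y -> update (update g y c) x b = update (update g x b) y c.
Proof.
move=> hxy; apply: functional_extensionality => q; rewrite /update.
by case: (eqVneq x q) => [<-|_] //; rewrite eq_sym (negbTE hxy).
Qed.

Lemma expect_update D F x : x \in D ->
  expect D F = p * expect D (fun g => F (update g x true))
               + (1 - p) * expect D (fun g => F (update g x false)).
Proof.
elim: D F => [|y D IH] F //= xyD.
have [<-|hxy] := eqVneq x y.
  have E b c : (fun g => F (update (update g x c) x b)) = (fun g => F (update g x b)).
    by apply: functional_extensionality => g; rewrite update_update.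
  by rewrite /= !E; ring.
move: xyD; rewrite in_cons (negbTE hxy) /= => xD.
rewrite (IH (fun g => F (update g y true)) xD) (IH (fun g => F (update g y false)) xD).
have E b c : (fun g => F (update (update g y c) x b)) = (fun g => F (update (update g x b) y c)).
  by apply: functional_extensionality => g; rewrite update_comm.
by rewrite !E; ring.
Qed.

Lemma expect_catl L D F : {subset L <= D} -> expect (L ++ D) F = expect D F.
Proof.
elim: L => [|x L IH] // sLD; rewrite cat_cons.
have xLD : x \in L ++ D by rewrite mem_cat sLD ?orbT ?mem_head.
rewrite /= -!expect_update // IH // => y yL.
by apply: sLD; rewrite in_cons yL orbT.
Qed.

Lemma expect_catr L D F :
  depends_on (fun q => q \in L) F -> expect (L ++ D) F = expect L F.
Proof.
elim: L F => [|x L IH] F hF /=.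
  have -> : F = fun _ => F (fun _ => false).
    by apply: functional_extensionality => g; apply: hF.
  by rewrite expect_const.
have hd b : depends_on (fun q => q \in L) (fun g => F (update g x b)).
  move=> g g' h; apply: hF => q; rewrite /update in_cons [q == x]eq_sym.
  by case: (x == q) => //= /h.
by rewrite !IH.
Qed.

Lemma expect_restrict L D F :
  depends_on (fun q => q \in L) F -> {subset L <= D} -> expect D F = expect L F.
Proof. by move=> hF sLD; rewrite -(expect_catl F sLD) expect_catr. Qed.

Lemma expect_mul_indep D P1 P2 F1 F2 :
  depends_on P1 F1 -> depends_on P2 F2 -> (forall q, P1 q -> ~~ P2 q) ->
  expect D (fun g => F1 g * F2 g) = expect D F1 * expect D F2.
Proof.
move=> + + dis12; elim: D F1 F2 => [|x D IH] F1 F2 h1 h2 //=.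
rewrite !IH //; try exact: depends_on_update.
have [P2x|nP2x] := boolP (P2 x).
  have nP1x : ~~ P1 x by apply/negP => /dis12; rewrite P2x.
  by rewrite !(update_irrelevant _ h1 nP1x); ring.
by rewrite !(update_irrelevant _ h2 nP2x); ring.
Qed.

Lemma expect_xor L b : uniq L ->
  expect L (fun g => (b (+) \big[addb/false]_(q <- L) g q)%:R) =
  (1 + (if b then 1 else -1) * (1 - 2 * p) ^+ size L) / 2.
Proof.
elim: L b => [|x L IH] b /=.
  by move=> _; rewrite big_nil addbF expr0; case: b => /=; field.
case/andP=> xL uL.
have E c : (fun g => (b (+) \big[addb/false]_(q <- x :: L) update g x c q)%:R) =
           (fun g => ((b (+) c) (+) \big[addb/false]_(q <- L) g q)%:R : R).
  apply: functional_extensionality => g.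
  rewrite big_cons {1}/update eqxx -addbA; congr (_ (+) (_ (+) _))%:R.
  apply: eq_big_seq => q qL; rewrite /update; case: eqP => // exq.
  by move: xL; rewrite exq qL.
rewrite !E !IH // addbT addbF exprS; clear E.
by case: b => /=; field.
Qed.

Definition ffun_cons k (b : bool) (xi : {ffun 'I_k -> bool}) : {ffun 'I_k.+1 -> bool} :=
  [ffun i => if unlift ord0 i is Some j then xi j else b].

Lemma sum_ffunS k (F : {ffun 'I_k.+1 -> bool} -> R) :
  \sum_(xi : {ffun 'I_k.+1 -> bool}) F xi =
  \sum_(b : bool) \sum_(xi : {ffun 'I_k -> bool}) F (ffun_cons b xi).
Proof.
rewrite pair_big /= (reindex (fun bxi : bool * {ffun 'I_k -> bool} => ffun_cons bxi.1 bxi.2)) //.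
exists (fun xi : {ffun 'I_k.+1 -> bool} => (xi ord0, [ffun j : 'I_k => xi (lift ord0 j)])) => [[b xi] _|xi _] /=.
  by rewrite ffunE unlift_none; congr (_, _); apply/ffunP => j; rewrite !ffunE liftK.
by apply/ffunP => i; rewrite ffunE; case: unliftP => [j|] ->; rewrite ?ffunE.
Qed.

Lemma sum_ffun_expect (D : seq T) (G : (T -> bool) -> R) :
  \sum_(xi : {ffun 'I_(size D) -> bool})
     (\prod_(t < size D) (if xi t then p else 1 - p))
     * G (fun q => nth false [seq xi t | t <- enum 'I_(size D)] (index q D))
  = expect D G.
Proof.
elim: D G => [|x D IH] G /=.
  rewrite (big_pred1 [ffun => false]) => [|xi]; last first.
    by apply/esym/eqP/ffunP => -[].
  rewrite big_ord0 mul1r; congr G; apply: functional_extensionality => q.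
  by rewrite (_ : enum 'I_0 = [::]) //; apply/size0nil; rewrite size_enum_ord.
rewrite sum_ffunS big_bool /= -(IH (fun g => G (update g x true))).
rewrite -(IH (fun g => G (update g x false))) !mulr_sumr.
congr (_ + _); apply: eq_bigr => xi _;
  rewrite big_ord_recl enum_ordSl /= !ffunE unlift_none mulrA;
  congr (_ * _ * G _).
all: try by apply: eq_bigr => i _; rewrite ffunE liftK.
all: apply: functional_extensionality => q; rewrite /update; case: (x == q) => //=.
all: by rewrite -map_comp; congr (nth _ _ _); apply: eq_map => i /=; rewrite ffunE liftK.
Qed.

Lemma expect_xor_bias L b : uniq L ->
  `|expect L (fun g => (b (+) \big[addb/false]_(q <- L) g q)%:R) - 1/2| =
  `|1 - 2 * p| ^+ size L / 2.
Proof.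
move=> uL; rewrite expect_xor // -normrX.
have -> : forall x : R, (1 + (if b then 1 else -1) * x) / 2 - 1/2 =
                        (if b then 1 else -1) * x / 2 by move=> x; field.
rewrite !normrM (_ : `|if b then 1 else -1| = 1); last by case: b; rewrite ?normrN normr1.
by rewrite mul1r [`|2^-1|]ger0_norm // invr_ge0 ler0n.
Qed.

(* [unif_mean D r H]: the first argument of [H] is a uniformly random bit
   string of length [r], the second the coins on [D]. *)
Fixpoint unif_mean (D : seq T) (r : nat) (H : seq bool -> (T -> bool) -> R) : R :=
  if r is r'.+1 then
    (unif_mean D r' (fun zs => H (true :: zs))
     + unif_mean D r' (fun zs => H (false :: zs))) / 2
  else expect D (H [::]).

Lemma unif_mean_bound D r H :
  (forall zs g, 0 <= H zs g <= 1) -> 0 <= unif_mean D r H <= 1.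
Proof.
elim: r H => [|r IH] H hH /=; first exact: expect_bound.
have /andP[t0 t1] := IH (fun zs => H (true :: zs)) (fun zs => hH _).
have /andP[f0 f1] := IH (fun zs => H (false :: zs)) (fun zs => hH _).
apply/andP; split; lra.
Qed.

Lemma eq_unif_mean D D' r H :
  (forall zs, expect D (H zs) = expect D' (H zs)) -> unif_mean D r H = unif_mean D' r H.
Proof.
elim: r H => [|r IH] H hH /=; first exact: hH.
by rewrite (IH (fun zs => H (true :: zs))) ?(IH (fun zs => H (false :: zs))).
Qed.

Fixpoint near_fair_bits (D : seq T) (P : T -> bool) (delta : R)
    (YQ : seq (((T -> bool) -> bool) * (T -> bool))) : Prop :=
  if YQ is (Y, Q) :: YQ' then
    [/\ forall q, Q q -> ~~ P q && ~~ has (fun yq => yq.2 q) YQ',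
        depends_on Q Y,
        `|expect D (fun g => (Y g)%:R) - 1/2| <= delta
      & near_fair_bits D P delta YQ']
  else True.

Lemma near_fair_bits_depends D P delta YQ :
  near_fair_bits D P delta YQ ->
  depends_on (fun q => has (fun yq => yq.2 q) YQ) (fun g => map (fun yq => yq.1 g) YQ).
Proof.
elim: YQ => [|[Y Q] YQ IH] //= [_ hY _ /IH hYQ] g g' h.
congr (_ :: _); first by apply: hY => q Qq; apply: h; rewrite Qq.
by apply: hYQ => q hq; apply: h; rewrite hq orbT.
Qed.

Lemma expect_near_fair_bits D delta YQ P H :
  (forall zs g, 0 <= H zs g <= 1) -> (forall zs, depends_on P (H zs)) ->
  near_fair_bits D P delta YQ ->
  `|expect D (fun g => H (map (fun yq => yq.1 g) YQ) g) - unif_mean D (size YQ) H|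
     <= (size YQ)%:R * delta.
Proof.
elim: YQ H => [|[Y Q] YQ IH] H hH hP /=.
  by move=> _; rewrite subrr normr0 mul0r.
move=> [hdis hY hb hok].
set G := fun b g => H (b :: map (fun yq => yq.1 g) YQ) g.
set Pb := fun q => P q || has (fun yq => yq.2 q) YQ.
have hG b : depends_on Pb (G b).
  move=> g g' h; rewrite /G (near_fair_bits_depends hok (g' := g')); last first.
    by move=> q hq; apply: h; rewrite /Pb hq orbT.
  by apply: (hP (b :: _)) => q Pq; apply: h; rewrite /Pb Pq.
have hdisb q : Q q -> ~~ Pb q by move=> /hdis; rewrite /Pb negb_or.
have hY1 : depends_on Q (fun g => (Y g)%:R : R) by move=> g g' /hY ->.
have hY2 : depends_on Q (fun g => 1 - (Y g)%:R : R) by move=> g g' /hY ->.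
have -> : (fun g => H (Y g :: [seq yq.1 g | yq <- YQ]) g) =
          (fun g => (Y g)%:R * G true g + (1 - (Y g)%:R) * G false g).
  by apply: functional_extensionality => g; rewrite /G; case: (Y g) => /=; ring.
rewrite -[(size YQ).+1%:R]natr1 [(_ + 1) * _]mulrDl mul1r.
rewrite expect_add (expect_mul_indep _ hY1 (hG true) hdisb).
rewrite (expect_mul_indep _ hY2 (hG false) hdisb) expect_1sub.
have hp : 0 <= expect D (fun g => (Y g)%:R) <= 1.
  by apply: expect_bound => g; case: (Y g); rewrite ?lexx ?ler01.
have IHt := IH (fun zs => H (true :: zs)) (fun zs => hH _) (fun zs => hP _) hok.
have IHf := IH (fun zs => H (false :: zs)) (fun zs => hH _) (fun zs => hP _) hok.
have hVt := unif_mean_bound D (size YQ) (fun zs g => hH (true :: zs) g).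
have hVf := unif_mean_bound D (size YQ) (fun zs g => hH (false :: zs) g).
exact: mix_near_average.
Qed.

End CoinExpectation.

Lemma map_uniq_inj_in (U V : eqType) (h : U -> V) (s : seq U) :
  uniq (map h s) -> {in s &, injective h}.
Proof.
elim: s => //= z s IH /andP[hz /IH hs] x y.
rewrite !in_cons => /orP[/eqP->|xs] /orP[/eqP->|ys] // E.
- by move: hz; rewrite E map_f.
- by move: hz; rewrite -E map_f.
- exact: hs.
Qed.

Lemma nonincreasing_stable (u : nat -> nat) : (forall t, (u t.+1 <= u t)%N) ->
  exists t0, forall t, (t0 <= t)%N -> u t = u t0.
Proof.
move=> hu; have mono : {homo u : s t / (s <= t)%N >-> (t <= s)%N}.
  apply: (@homo_leq _ u (fun a b => (b <= a)%N)) => // y x z h1 h2.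
  exact: leq_trans h2 h1.
suff: forall k t0, (u t0 <= k)%N -> exists t1, forall t, (t1 <= t)%N -> u t = u t1.
  by apply; apply: leqnn (u 0%N).
elim=> [|k IH] t0 ht0.
  by exists t0 => t /mono; lia.
have [stable|] := classic (forall t, (t0 <= t)%N -> u t = u t0); first by exists t0.
move=> /not_all_ex_not[t /(imply_to_and (t0 <= t)%N)[ht ne]].
apply: (IH t); have := mono _ _ ht; lia.
Qed.

Section Chain.
Variables (f : int -> int) (n : nat).

Lemma window_col_le p : p \in window n -> p.2 <= n%:Z.
Proof.
case/allpairsP => -[i j] [_ /= /mapP[k] + ->] ->.
by rewrite mem_iota -mul2n /=; lia.
Qed.

Lemma leq_steps c M j : c <= M -> (steps c j <= steps M j)%N.
Proof. by rewrite /steps; case: ifP; case: ifP; lia. Qed.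

Lemma stepsS c j : j < c -> steps (c + 1) j = (steps c j).+1.
Proof. by rewrite /steps; case: ifP; case: ifP; lia. Qed.

Lemma Xval_split M c A g i j : j < c -> c <= M ->
  Xval f M A g (i, j) = Xval f c (fun s => Xval f M A g (s, c)) g (i, j).
Proof.
move=> hjc hcM; rewrite /Xval /=.
set a := steps c j; set b := steps M c.
have ha : a = `|c - j|%N by rewrite /a /steps hjc.
have -> : steps M j = (a + b)%N by rewrite ha /b /steps; case: ifP; case: ifP; lia.
rewrite iotaD add0n big_cat /= -[a in iota a b]addn0 iotaDl big_map.
rewrite addnC iterD -addbA; congr (_ (+) _); rewrite addbC; congr (_ (+) _).
apply: eq_bigr => k _; rewrite addnC iterD.
by have -> : j + (k + a)%N%:Z = c + k%:Z by rewrite ha; lia.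
Qed.

Lemma mem_noise_sites M p k : p \in window n -> (k < steps M p.2)%N ->
  (iter k f p.1, p.2 + k%:Z) \in noise_sites f n M.
Proof.
move=> hp hk; rewrite /noise_sites mem_undup; apply/flattenP.
exists [seq (iter k f p.1, p.2 + k%:Z) | k <- iota 0 (steps M p.2)].
  by apply/mapP; exists p.
by apply/mapP; exists k; rewrite // mem_iota.
Qed.

Lemma noise_sitesP M q : q \in noise_sites f n M -> exists p k,
  [/\ p \in window n, (k < steps M p.2)%N & q = (iter k f p.1, p.2 + k%:Z)].
Proof.
rewrite mem_undup => /flattenP [s /mapP [p hp ->] /mapP [k]].
by rewrite mem_iota add0n => /andP[_ hk] ->; exists p, k.
Qed.

Lemma noise_sites_subset c M : c <= M -> {subset noise_sites f n c <= noise_sites f n M}.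
Proof.
move=> hcM q /noise_sitesP [p [k [hp hk ->]]]; apply: mem_noise_sites => //.
exact: leq_trans hk (leq_steps _ hcM).
Qed.

Lemma noise_sites_col_lt c q : q \in noise_sites f n c -> q.2 < c.
Proof. by move=> /noise_sitesP [[i j] [k [_ + ->]]]; rewrite /steps /=; case: ifP; lia. Qed.

Lemma Xval_depends M Z p : p \in window n ->
  depends_on (fun q => q \in noise_sites f n M) (fun g => Xval f M Z g p).
Proof.
move=> hp g g' h; rewrite /Xval; congr (_ (+) _); apply: eq_big_seq => k.
by rewrite mem_iota add0n => /andP[_ hk]; apply/h/mem_noise_sites.
Qed.

Definition ancestors (c : int) := undup [seq iter (steps c p.2) f p.1 | p <- window n].

Lemma mem_ancestors c p : p \in window n -> iter (steps c p.2) f p.1 \in ancestors c.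
Proof. by move=> hp; rewrite mem_undup; apply/mapP; exists p. Qed.

Lemma ancestorsP c s : s \in ancestors c ->
  exists2 p, p \in window n & s = iter (steps c p.2) f p.1.
Proof. by rewrite mem_undup => /mapP. Qed.

Lemma ancestorsS c : n%:Z < c -> ancestors (c + 1) =i map f (ancestors c).
Proof.
move=> hc x; rewrite /ancestors mem_undup.
apply/mapP/mapP => [[[i j] hp ->]|[y + ->]].
  exists (iter (steps c j) f i); first by rewrite mem_undup; apply/mapP; exists (i, j).
  by rewrite /= stepsS //; have /= := window_col_le hp; lia.
rewrite mem_undup => /mapP [[i j] hp ->]; exists (i, j) => //=.
by rewrite stepsS //; have /= := window_col_le hp; lia.
Qed.

Lemma size_ancestorsS c : n%:Z < c ->
  size (ancestors (c + 1)) = size (undup (map f (ancestors c))).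
Proof.
move=> hc; apply/perm_size/uniq_perm; rewrite ?undup_uniq // => x.
by rewrite mem_undup ancestorsS.
Qed.

Lemma ancestors_inj c : n%:Z < c -> size (ancestors (c + 1)) = size (ancestors c) ->
  {in ancestors c &, injective f}.
Proof.
move=> hc hs; apply: map_uniq_inj_in.
by rewrite -[uniq _]negbK -ltn_size_undup -size_ancestorsS // hs size_map ltnn.
Qed.

Lemma ancestors_size_stable : exists c0 : int, n%:Z < c0 /\
  forall c, c0 <= c -> size (ancestors (c + 1)) = size (ancestors c).
Proof.
pose u t := size (ancestors (n%:Z + 1 + t%:Z)).
have [t0 stable] : exists t0, forall t, (t0 <= t)%N -> u t = u t0.
  apply: nonincreasing_stable => t; rewrite /u.
  have -> : n%:Z + 1 + t.+1%:Z = n%:Z + 1 + t%:Z + 1 by lia.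
  rewrite size_ancestorsS; last by lia.
  by apply: leq_trans (size_undup _) _; rewrite size_map.
exists (n%:Z + 1 + t0%:Z); split => [|c hc]; first lia.
have [d cE] : exists d : nat, c = n%:Z + 1 + d%:Z.
  by exists (absz (c - (n%:Z + 1))%R); lia.
rewrite {}cE in hc *.
have -> : n%:Z + 1 + d%:Z + 1 = n%:Z + 1 + d.+1%:Z by lia.
by rewrite -/(u d) -/(u d.+1) !stable //; lia.
Qed.

Lemma iter_inj_ancestors c0 : n%:Z < c0 ->
  (forall c, c0 <= c -> size (ancestors (c + 1)) = size (ancestors c)) ->
  forall t c, c0 <= c -> {in ancestors c &, injective (iter t f)}.
Proof.
move=> hc0 hst; elim=> [|t IH] c hc s s' hs hs' //.
rewrite !iterSr => /(IH (c + 1)) E.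
have fanc x : x \in ancestors c -> f x \in ancestors (c + 1).
  by move=> hx; rewrite ancestorsS ?map_f //; lia.
by apply: (ancestors_inj _ (hst c hc)) => //; [lia | apply: E; [lia|exact: fanc..]].
Qed.

End Chain.

Section Approximation.
Variables (R : realType) (f : int -> int) (n : nat) (a : int -> int -> bool) (c0 : int).
Hypothesis n_lt_c0 : n%:Z < c0.
Hypothesis ancestors_stable :
  forall c, c0 <= c -> size (ancestors f n (c + 1)) = size (ancestors f n c).

Definition window_indicator (zs : seq bool) (g : int * int -> bool) : R :=
  (all (fun p => Xval f c0 (fun s => nth false zs (index s (ancestors f n c0))) g p
                 == a p.1 p.2) (window n))%:R.

Definition ancestor_value M A s g := Xval f M A g (s, c0).

Definition forward_line s (q : int * int) :=
  (c0 <= q.2) && (q.1 == iter `|q.2 - c0|%N f s).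

Lemma ancestor_value_depends M A s : depends_on (forward_line s) (ancestor_value M A s).
Proof.
move=> g g' h; rewrite /ancestor_value /Xval /=; congr (_ (+) _).
apply: eq_bigr => k _; apply: h; rewrite /forward_line /=.
by rewrite (_ : absz (c0 + k%:Z - c0)%R = k) ?eqxx ?andbT; lia.
Qed.

Lemma ancestor_value_bias M A s : c0 < M -> s \in ancestors f n c0 ->
  `|expect (1/3 : R) (noise_sites f n M) (fun g => (ancestor_value M A s g)%:R) - 1/2|
     = (1/3) ^+ steps M c0 / 2.
Proof.
move=> hM hs.
set K := steps M c0; set line := [seq (iter k f s, c0 + k%:Z) | k <- iota 0 K].
have -> : (fun g => (ancestor_value M A s g)%:R) =
          (fun g => (A (iter K f s) (+) \big[addb/false]_(q <- line) g q)%:R : R).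
  by apply: functional_extensionality => g; rewrite /ancestor_value /Xval big_map.
have uline : uniq line by rewrite map_inj_uniq ?iota_uniq // => k k' [] _; lia.
have line_sites : {subset line <= noise_sites f n M}.
  move=> q /mapP [k]; rewrite mem_iota add0n => /andP[_ hk] ->.
  have [[i j] hp ->] := ancestorsP hs.
  have hj : j <= n%:Z by exact: (window_col_le hp).
  have := @mem_noise_sites f n M (i, j) (k + steps c0 j)%N hp.
  rewrite /= -iterD (_ : j + (k + steps c0 j)%N%:Z = c0 + k%:Z); last first.
    by rewrite /steps ifT; lia.
  by apply; move: hk; rewrite /K /steps !ifT; lia.
rewrite (expect_restrict _ _ line_sites); last first.
  by move=> g g' h; congr (_ (+) _)%:R; exact: eq_big_seq.
rewrite expect_xor_bias // size_map size_iota ger0_norm; last lra.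
by congr (_ ^+ _ / 2); field.
Qed.

Lemma ancestor_lines_near_fair M A (l : seq int) : c0 < M ->
  uniq l -> {subset l <= ancestors f n c0} ->
  near_fair_bits (1/3 : R) (noise_sites f n M) (fun q => q \in noise_sites f n c0)
    ((1/3) ^+ steps M c0 / 2) [seq (ancestor_value M A s, forward_line s) | s <- l].
Proof.
move=> hM; elim: l => //= s l IH /andP[sl ul] sub_l.
have hs : s \in ancestors f n c0 by apply: sub_l; rewrite mem_head.
split; last 1 first.
- by apply: IH => // x hx; apply: sub_l; rewrite in_cons hx orbT.
- move=> [q1 q2] /andP[/= hq2 /eqP /= hq1]; apply/andP; split.
    by apply/negP => /noise_sites_col_lt /=; lia.
  rewrite has_map; apply/hasP => -[s' s'l /andP[_ /eqP /= hq1']].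
  have hs' : s' \in ancestors f n c0 by apply: sub_l; rewrite in_cons s'l orbT.
  have ss' := iter_inj_ancestors n_lt_c0 ancestors_stable (lexx c0) hs hs'
    (etrans (esym hq1) hq1').
  by move: sl; rewrite ss' s'l.
- exact: ancestor_value_depends.
- by rewrite ancestor_value_bias.
Qed.

Lemma cond_probE M A : c0 < M ->
  cond_prob R f n a M A = expect (1/3) (noise_sites f n M)
    (fun g => window_indicator (map (fun s => ancestor_value M A s g) (ancestors f n c0)) g).
Proof.
move=> hM; rewrite /cond_prob /= (_ : 2 / 3 = 1 - 1 / 3 :> R); last by field.
rewrite (sum_ffun_expect _ _ (fun g =>
  if all (fun p => Xval f M A g p == a p.1 p.2) (window n) then 1 else 0)).
congr expect; apply: functional_extensionality => g.
rewrite /window_indicator (eq_in_all (a2 := fun p => Xval f c0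
  (fun s => nth false [seq ancestor_value M A s g | s <- ancestors f n c0]
     (index s (ancestors f n c0))) g p == a p.1 p.2)); first by case: all.
move=> -[i j] hp /=; have hj : j <= n%:Z by exact: (window_col_le hp).
rewrite (@Xval_split f M c0 A g i j) ?(ltW hM) //; last by lia.
congr (_ == _); rewrite /Xval; congr (_ (+) _).
have hs := mem_ancestors f c0 hp.
by rewrite (nth_map 0) ?index_mem // nth_index.
Qed.

Lemma cond_prob_near_unif_mean M A : c0 < M ->
  `|cond_prob R f n a M A -
    unif_mean (1/3) (noise_sites f n c0) (size (ancestors f n c0)) window_indicator|
     <= (size (ancestors f n c0))%:R * ((1/3) ^+ steps M c0 / 2).
Proof.
move=> hM; set S := ancestors f n c0.
have indic01 zs g : 0 <= window_indicator zs g <= 1.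
  by rewrite /window_indicator; case: (all _ _); rewrite ?lexx ?ler01.
have indic_dep zs :
    depends_on (fun q => q \in noise_sites f n c0) (window_indicator zs).
  move=> g g' h; rewrite /window_indicator; congr (nat_of_bool _)%:R; apply: eq_in_all => p hp.
  by rewrite (Xval_depends _ hp h).
have restrict : unif_mean (1/3) (noise_sites f n M) (size S) window_indicator =
                unif_mean (1/3) (noise_sites f n c0) (size S) window_indicator.
  apply: eq_unif_mean => zs; apply: (expect_restrict _ (indic_dep zs)).
  exact/noise_sites_subset/ltW.
have := expect_near_fair_bits _ indic01 indic_dep
  (ancestor_lines_near_fair A hM (undup_uniq _) (fun _ h => h)).
rewrite size_map restrict cond_probE //.
under eq_expect => g do rewrite -map_comp.
by apply; lra.
Qed.

End Approximation.

Theorem mainTheorem11 (R : realType) (f : int -> int) (n : nat)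
    (a : int -> int -> bool) :
  infinite_to_one_onto f -> (1 <= n)%N ->
  forall eps : R, 0 < eps ->
  exists m : int, forall (M N : int) (A B : int -> bool),
    m < M -> m < N ->
    `| cond_prob R f n a M A - cond_prob R f n a N B | < eps.
Proof.
move=> _ _ eps eps_gt0.
have [c0 [n_lt_c0 stable]] := ancestors_size_stable f n.
set r := size (ancestors f n c0).
have [K hK] := exists_third_pow_lt r eps_gt0.
set V := unif_mean (1/3) (noise_sites f n c0) r (window_indicator R f n a c0).
have near X Z : c0 + K%:Z < X -> `|cond_prob R f n a X Z - V| <= r%:R * (1/3) ^+ K / 2.
  move=> hX; have hc0X : c0 < X by lia.
  apply: le_trans (@cond_prob_near_unif_mean R f n a c0 n_lt_c0 stable X Z hc0X) _.
  rewrite mulrA ler_pM2r ?invr_gt0 ?ltr0n //; apply: ler_wpM2l; first exact: ler0n.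
  by apply: ler_wiXn2l; [lra | lra | rewrite /steps ifT; lia].
exists (c0 + K%:Z) => M N A B hM hN.
have := ler_distD V (cond_prob R f n a M A) (cond_prob R f n a N B).
rewrite [`|V - _|]distrC; have := near M A hM; have := near N B hN; lra.
Qed.
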